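(* Consider the online execution scheduling algorithm OES (described in the context) applied to a distributed GNN training job with a fixed task placement. Then at every time step $t$ and for every machine $m\in\{1,\dots,M\}$, the ingress flow degree satisfies $\Delta^m_{in}\le \widehat{\Delta^m_{in}}$ and the egress flow degree satisfies $\Delta^m_{out}\le \widehat{\Delta^m_{out}}$.
   Context: Setting (distributed GNN training job). There are $M$ machines; machine $m$ has available incoming bandwidth $B^m_{in}$ and outgoing bandwidth $B^m_{out}$. The set of tasks is $J=J_g\cup J_s\cup J_w\cup J_{ps}$ (graph store servers, samplers, workers, parameter servers (PSs)); each worker has an associated set of samplers. A fixed placement assigns each task $j$ to exactly one machine ($y^m_j=1$ iff $j$ is on machine $m$). Training runs for $N$ iterations in discrete time steps $t=1,2,\dots$; task $j$ takes execution time $p_j$ in every iteration; $(j,n)$ denotes task $j$ in iteration $n$. Successor relation $succ(j,n)$: $(s,n)\in succ(g,n)$ for every graph store server $g$ and sampler $s$; $(w,n)\in succ(s,n)$ for every sampler $s$ and its associated worker $w$; $(ps,n)\in succ(w,n)$ for every worker $w$ and PS $ps$; $(w,n+1)\in succ(ps,n)$ for every PS $ps$ and worker $w$. For each $(j',n')\in succ(j,n)$ with $j,j'$ on different machines there is a flow $(j,n)\to(j',n')$ of data volume $d_{(j,n)\to(j',n')}$, which may only start after $(j,n)$ finishes, must finish before $(j',n')$ starts, and (inter-iteration dependency) may not start before the flow $(j,n-1)\to(j',n'-1)$ has finished. Also $(j,n+1)$ may start only after $(j,n)$ finishes, and if $j,j'$ are on the same machine, $(j',n')$ may start only after $(j,n)$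 finishes (no transfer needed). Algorithm OES. It maintains a set $F_{act}$ of active flows (started but unfinished) and a set $F_{pend}$ of pending flows (whose source task is finished but whose previous-iteration counterpart $(j,n-1)\to(j',n'-1)$ has not finished). At $t=1$ all graph store servers of iteration 1 start. At each time step $t$: every task $(j,n)$ whose dependencies are all satisfied (all required data received, previous iteration of $j$ done) starts; for every task $(j,n)$ that finished at $t-1$ and every inter-machine flow $(j,n)\to(j',n')$ out of it, the flow is added to $F_{pend}$ if $(j,n-1)\to(j',n'-1)\in F_{act}\cup F_{pend}$, and to $F_{act}$ otherwise; for every flow $(j,n)\to(j',n')$ that finished at $t-1$, if $(j,n+1)\to(j',n'+1)\in F_{pend}$ it is moved to $F_{act}$. Then, with $\Delta^m_{in}$ (resp. $\Delta^m_{out}$) the number of flows in $F_{act}$ whose destination (resp. source) task is on machine $m$, every active flow from a task on machine $m$ to a task on machine $m'$ transmits $\min\{B^{m'}_{in}/\Delta^{m'}_{in},\,B^m_{out}/\Delta^m_{out}\}$ data units at time $t$. One-iteration degrees. Let $F_{one\_iter}$ be the set of all inter-machine flows of one training iteration (including the transfers of parameters updated by the PSs in that iteration to the workers). $\widehat{\Delta^m_{in}}$ (resp. $\widehat{\Delta^m_{out}}$) is the number of flows in $F_{one\_iter}$ whose destination (resp. source) task is placed on machine $m$. *)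

From HB Require Import structures.
From mathcomp Require Import all_boot all_order all_algebra.
Set Implicit Arguments. Unset Strict Implicit. Unset Printing Implicit Defensive.
Import Order.TTheory GRing.Theory Num.Theory.

Inductive role := GraphStore | Sampler | Worker | PServer.

(* Status of a flow (j,n) -> (j',n') in the algorithm:
   not yet created, in F_pend, in F_act, finished. *)
Inductive fstatus := FNone | FPend | FAct | FDone.

Definition is_act (s : fstatus) : bool := if s is FAct then true else false.
Definition is_pend (s : fstatus) : bool := if s is FPend then true else false.
Definition is_none (s : fstatus) : bool := if s is FNone then true else false.
Definition is_done (s : fstatus) : bool := if s is FDone then true else false.
Definition is_pend_or_act (s : fstatus) : bool := is_pend s || is_act s.

Record job (R : realFieldType) := Job {
  task : finType;
  kind : task -> role;
  assoc : task -> task -> bool;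
  nmach : nat;
  place : task -> 'I_nmach;         (* y^m_j = 1 iff place j = m *)
  Bin : 'I_nmach -> R;
  Bout : 'I_nmach -> R;
  ptime : task -> nat;
  dvol : task -> task -> nat -> R;  (* dvol j j' n = volume of the flow out of (j,n) to j' *)
  niter : nat
}.

Section OES.
Variable R : realFieldType.
Variable G : job R.
Local Notation T := (task G).

(* (j',n+off j j') \in succ(j,n)  iff  dep j j' *)
Definition dep (i j : T) : bool :=
  match kind i, kind j with
  | GraphStore, Sampler => true
  | Sampler, Worker => assoc i j
  | Worker, PServer => true
  | PServer, Worker => true
  | _, _ => false
  end.

Definition off (i j : T) : nat :=
  match kind i, kind j with
  | PServer, Worker => 1
  | _, _ => 0
  end.

(* (i,j,n) denotes the flow (i,n) -> (j, n + off i j); it exists iff it is an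
   inter-machine dependency between task instances of iterations 1..N. *)
Definition is_flow (i j : T) (n : nat) : bool :=
  [&& dep i j, place i != place j, 0 < n & n + off i j <= niter G].

(* State of the execution at the end of a time step. *)
Record state := State {
  tstart : T -> nat -> option nat;
  fstat : T -> T -> nat -> fstatus;
  frem : T -> T -> nat -> R;
  ffin : T -> T -> nat -> option nat
}.

(* Task (j,n), started at s0, runs during steps s0 .. s0 + p_j - 1.
   done_before s j n t : (j,n) has finished at a step <= t - 1. *)
Definition done_before (s : state) (j : T) (n t : nat) : bool :=
  if tstart s j n is Some s0 then s0 + ptime j <= t else false.

Definition fin_at_prev (s : state) (j : T) (n t : nat) : bool :=
  if tstart s j n is Some s0 then s0 + ptime j == t else false.

(* All dependencies of (j,n) are satisfied at step t (s = state at end of t-1). *)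
Definition ready (s : state) (t : nat) (j : T) (n : nat) : bool :=
  [&& 0 < n, n <= niter G, tstart s j n == None,
      (n == 1) || done_before s j n.-1 t &
      [forall i : T, (dep i j && (off i j < n)) ==>
          (if place i == place j then done_before s i (n - off i j) t
           else is_done (fstat s i j (n - off i j)))]].

Definition pre_step (t : nat) (s : state) : state :=
  let st1 := fun j n => if ready s t j n then Some t else tstart s j n in
  let fs2 := fun i j n =>
    if [&& is_flow i j n, is_none (fstat s i j n) & fin_at_prev s i n t]
    then (if is_pend_or_act (fstat s i j n.-1) then FPend else FAct)
    else fstat s i j n in
  let fs3 := fun i j n =>
    if is_pend (fs2 i j n) && (ffin s i j n.-1 == Some t.-1) then FAct
    else fs2 i j n in
  State st1 fs3 (frem s) (ffin s).

Definition Delta_in (s : state) (m : 'I_(nmach G)) : nat :=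
  \sum_(i : T) \sum_(j : T) \sum_(n < (niter G).+1)
     (is_act (fstat s i j n) && (place j == m) : nat).

Definition Delta_out (s : state) (m : 'I_(nmach G)) : nat :=
  \sum_(i : T) \sum_(j : T) \sum_(n < (niter G).+1)
     (is_act (fstat s i j n) && (place i == m) : nat).

Definition rate (s : state) (i j : T) : R :=
  (Num.min (Bin (place j) / (Delta_in s (place j))%:R)
           (Bout (place i) / (Delta_out s (place i))%:R))%R.

Definition transmit (t : nat) (s : state) : state :=
  let rem := fun i j n =>
    if is_act (fstat s i j n) then (frem s i j n - rate s i j)%R else frem s i j n in
  let fin := fun i j n => is_act (fstat s i j n) && (rem i j n <= 0)%R in
  State (tstart s)
        (fun i j n => if fin i j n then FDone else fstat s i j n)
        rem
        (fun i j n => if fin i j n then Some t else ffin s i j n).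

Definition init_state : state :=
  State (fun _ _ => None) (fun _ _ _ => FNone) (fun i j n => dvol i j n)
        (fun _ _ _ => None).

Fixpoint state_at (t : nat) : state :=
  match t with
  | 0 => init_state
  | t'.+1 => transmit t'.+1 (pre_step t'.+1 (state_at t'))
  end.

(* The state during time step t (t >= 1), with F_act as used for transmission. *)
Definition active_state (t : nat) : state := pre_step t (state_at t.-1).

Definition oes_Delta_in (t : nat) (m : 'I_(nmach G)) : nat :=
  Delta_in (active_state t) m.
Definition oes_Delta_out (t : nat) (m : 'I_(nmach G)) : nat :=
  Delta_out (active_state t) m.

(* One-iteration degrees: the flows of F_one_iter are in bijection with the
   pairs (j,j') with dep j j' placed on different machines. *)
Definition hat_Delta_in (m : 'I_(nmach G)) : nat :=
  \sum_(i : T) \sum_(j : T)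
     ([&& dep i j, place i != place j & place j == m] : nat).
Definition hat_Delta_out (m : 'I_(nmach G)) : nat :=
  \sum_(i : T) \sum_(j : T)
     ([&& dep i j, place i != place j & place i == m] : nat).

End OES.

Arguments oes_Delta_in {R} G t m.
Arguments oes_Delta_out {R} G t m.
Arguments hat_Delta_in {R} G m.
Arguments hat_Delta_out {R} G m.

From mathcomp Require Import all_boot all_order all_algebra.
From mathcomp Require Import zify.
Set Implicit Arguments. Unset Strict Implicit. Unset Printing Implicit Defensive.

(* For a fixed pair (j, j') of dependent tasks, the flow of iteration n only
   becomes active after the flow of iteration n-1 has finished: OES either
   parks it in F_pend until its predecessor finishes, or activates it at once
   because the predecessor is neither pending nor active; in the latter case
   the predecessor is already finished, since p_j >= 1 forces (j, n-1) to have
   finished strictly earlier than (j, n), so its flow was created earlier.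
   Hence at any time at most one flow per inter-machine pair (j, j') is active,
   and the number of such pairs at machine m is the one-iteration degree. *)

Section OESInvariants.
Variables (R : realFieldType) (G : job R).
Local Notation T := (task G).
Local Notation state := (state G).

Lemma is_flow_gt0 (i j : T) n : is_flow i j n -> 0 < n.
Proof. by case/and4P. Qed.

Lemma is_flow_pred (i j : T) n : is_flow i j n -> 1 < n -> is_flow i j n.-1.
Proof. by case/and4P => dep_ij cross _ le_nN n_gt1; apply/and4P; split => //; lia. Qed.

Lemma done_before_succ (s : state) j n t :
  done_before s j n t.+1 = done_before s j n t || fin_at_prev s j n t.+1.
Proof.
by rewrite /done_before /fin_at_prev; case: (tstart s j n) => // s0; rewrite leq_eqVlt orbC.
Qed.

Record consistent (t : nat) (s : state) : Prop := {
  flow_support : forall i j n, fstat s i j n <> FNone -> is_flow i j n;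
  start_chain : forall j n s0, tstart s j n = Some s0 ->
    0 < n /\ (1 < n -> exists2 s1, tstart s j n.-1 = Some s1 & s1 + ptime j <= s0);
  created_iff_done : forall i j n, is_flow i j n ->
    is_none (fstat s i j n) = ~~ done_before s i n t;
  started_chain : forall i j n, 1 < n ->
    is_act (fstat s i j n) || is_done (fstat s i j n) -> fstat s i j n.-1 = FDone }.

(* A flow left pending although its predecessor finished at step t is
   activated at the start of step t+1. *)
Record end_invariant (t : nat) (s : state) : Prop := {
  end_consistent :> consistent t s;
  ffin_end : forall i j n t', ffin s i j n = Some t' -> fstat s i j n = FDone /\ t' <= t;
  pend_end : forall i j n, is_pend (fstat s i j n) ->
    1 < n /\ (is_pend_or_act (fstat s i j n.-1) || (ffin s i j n.-1 == Some t)) }.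

Record active_invariant (t : nat) (s : state) : Prop := {
  active_consistent :> consistent t s;
  ffin_active : forall i j n t', ffin s i j n = Some t' -> fstat s i j n = FDone /\ t' < t;
  pend_active : forall i j n, is_pend (fstat s i j n) ->
    1 < n /\ is_pend_or_act (fstat s i j n.-1) }.

Lemma end_invariant_init : end_invariant 0 (init_state G).
Proof. by do 2?split => // i j n []. Qed.

Lemma transmit_cases t (s : state) i j n :
  (fstat (transmit t s) i j n = fstat s i j n /\ ffin (transmit t s) i j n = ffin s i j n) \/
  [/\ fstat s i j n = FAct, fstat (transmit t s) i j n = FDone
    & ffin (transmit t s) i j n = Some t].
Proof.
by rewrite /transmit /=; case: ifP => [/andP [A _]|_]; [right | left] => //; move: A; case: fstat.
Qed.

Lemma transmit_invariant t (s : state) :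
  active_invariant t s -> end_invariant t (transmit t s).
Proof.
move=> inv; split; first split.
- move=> i j n; case: (transmit_cases t s i j n) => [[-> _]|[A _ _] _].
    exact: (flow_support inv).
  by apply: (flow_support inv); rewrite A.
- exact: (start_chain inv).
- move=> i j n fl; change (done_before _ i n t) with (done_before s i n t).
  rewrite -(created_iff_done inv fl).
  by case: (transmit_cases t s i j n) => [[-> _]|[-> -> _]].
- move=> i j n n_gt1 started.
  have D : fstat s i j n.-1 = FDone.
    apply: (started_chain inv) => //.
    by move: started; case: (transmit_cases t s i j n) => [[-> _]|[-> _ _]].
  by case: (transmit_cases t s i j n.-1) => [[-> _]|[A _ _]] //; rewrite D in A.
- move=> i j n t'; case: (transmit_cases t s i j n) => [[-> ->]|[_ -> -> [<-]]] //.
  by move=> /(ffin_active inv) [D lt_t't]; split => //; apply: ltnW.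
- move=> i j n; case: (transmit_cases t s i j n) => [[-> _]|[_ -> _]] // P.
  have [n_gt1 Q] := pend_active inv P; split => //.
  by case: (transmit_cases t s i j n.-1) => [[-> _]|[_ _ ->]]; rewrite ?Q ?eqxx ?orbT.
Qed.

Lemma pre_step_done t (s : state) i j n :
  fstat s i j n = FDone -> fstat (pre_step t s) i j n = FDone.
Proof. by move=> E; rewrite /pre_step /= E /= !andbF. Qed.

Lemma pre_step_act t (s : state) i j n :
  fstat s i j n = FAct -> fstat (pre_step t s) i j n = FAct.
Proof. by move=> E; rewrite /pre_step /= E /= !andbF. Qed.

Lemma pre_step_pend t (s : state) i j n : fstat s i j n = FPend ->
  fstat (pre_step t s) i j n = if ffin s i j n.-1 == Some t.-1 then FAct else FPend.
Proof. by move=> E; rewrite /pre_step /= E /= !andbF. Qed.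

Lemma pre_step_tstart t (s : state) j n s0 :
  tstart s j n = Some s0 -> tstart (pre_step t s) j n = Some s0.
Proof. by move=> E; rewrite /= /ready E /= !andbF. Qed.

Section PreStep.
Hypothesis ptime_gt0 : forall j : T, 0 < ptime j.
Variables (t : nat) (s : state).
Hypothesis inv : end_invariant t s.
Local Notation s' := (pre_step t.+1 s).

Lemma pre_step_none i j n : fstat s i j n = FNone ->
  fstat s' i j n = if is_flow i j n && fin_at_prev s i n t.+1 then
    (if is_pend_or_act (fstat s i j n.-1) then FPend else FAct) else FNone.
Proof.
move=> E; rewrite /pre_step /= E /=.
case: (is_flow i j n && fin_at_prev s i n t.+1) => //=.
case P: (is_pend_or_act _) => //=.
by case: eqP => // /(ffin_end inv) [D _]; rewrite D in P.
Qed.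

Lemma pre_step_pend_or_act i j n :
  is_pend_or_act (fstat s i j n) -> is_pend_or_act (fstat s' i j n).
Proof.
case E: (fstat s i j n) => // _; last by rewrite pre_step_act.
by rewrite pre_step_pend //; case: eqP.
Qed.

Lemma done_before_pre_step i n : done_before s' i n t.+1 = done_before s i n t.+1.
Proof.
rewrite /done_before /=; case: ifP => // /and5P [_ _ /eqP -> _ _].
by have := ptime_gt0 i; lia.
Qed.

(* The previous iteration of the source finished at least p_i >= 1 steps
   before this one, so its flow out already exists. *)
Lemma pred_flow_created i j n : is_flow i j n -> fin_at_prev s i n t.+1 -> 1 < n ->
  fstat s i j n.-1 <> FNone.
Proof.
move=> fl; rewrite /fin_at_prev; case E: (tstart s i n) => [s0|] // /eqP fin n_gt1.
have [_ /(_ n_gt1) [s1 E1 le_s1]] := start_chain inv E.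
have := created_iff_done inv (is_flow_pred fl n_gt1); rewrite /done_before E1.
have -> : s1 + ptime i <= t by have := ptime_gt0 i; lia.
by case: (fstat s i j n.-1).
Qed.

Lemma pre_step_start_chain j n s0 : tstart s' j n = Some s0 ->
  0 < n /\ (1 < n -> exists2 s1, tstart s' j n.-1 = Some s1 & s1 + ptime j <= s0).
Proof.
rewrite [tstart _ j n]/= /ready; case: ifP => [/and5P [n_gt0 _ _ prev _] [<-] | _ E].
  split => // n_gt1; move: prev; rewrite gtn_eqF // /done_before.
  by case E1: (tstart s j n.-1) => [s1|] // le_s1; exists s1 => //; apply: pre_step_tstart.
have [n_gt0 chain] := start_chain inv E; split => // n_gt1.
by have [s1 E1 le_s1] := chain n_gt1; exists s1 => //; apply: pre_step_tstart.
Qed.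

Lemma pre_step_consistent : consistent t.+1 s'.
Proof.
split.
- move=> i j n; case E: (fstat s i j n);
    try by move=> _; apply: (flow_support inv); rewrite E.
  by rewrite pre_step_none //; case: andP => [[]|].
- exact: pre_step_start_chain.
- move=> i j n fl; rewrite done_before_pre_step done_before_succ.
  case: (done_before s i n t) (created_iff_done inv fl); case E: (fstat s i j n) => // _.
  + by rewrite pre_step_pend //; case: eqP.
  + by rewrite pre_step_act.
  + by rewrite pre_step_done.
  + by rewrite pre_step_none // fl; case: fin_at_prev => //=; case: is_pend_or_act.
- move=> i j n n_gt1 started; apply: pre_step_done; move: started.
  case E: (fstat s i j n).
  + rewrite pre_step_none //; case: andP => // [[fl fin]]; case P: is_pend_or_act => // _.
    by move: P (pred_flow_created fl fin n_gt1); case: (fstat s i j n.-1).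
  + by rewrite pre_step_pend //; case: eqP => // /(ffin_end inv) [].
  all: by move=> _; apply: (started_chain inv) => //; rewrite E.
Qed.

Lemma pre_step_invariant : active_invariant t.+1 s'.
Proof.
split; first exact: pre_step_consistent.
  move=> i j n t' /(ffin_end inv) [D le_t't]; split; [exact: pre_step_done | lia].
move=> i j n; case E: (fstat s i j n).
- rewrite pre_step_none //; case: andP => // [[fl _]]; case P: is_pend_or_act => // _.
  split; last exact: pre_step_pend_or_act.
  have : is_flow i j n.-1 by apply: (flow_support inv); move: P; case: (fstat s i j n.-1).
  by move/is_flow_gt0; lia.
- rewrite pre_step_pend // succnK; case: ifP => // notfin _.
  have := pend_end inv (i := i) (j := j) (n := n); rewrite E notfin orbF => /(_ isT) [n_gt1 P].
  by split => //; apply: pre_step_pend_or_act.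
- by rewrite pre_step_act.
- by rewrite pre_step_done.
Qed.

End PreStep.

Lemma state_at_invariant (ptime_gt0 : forall j : T, 0 < ptime j) t :
  end_invariant t (state_at G t).
Proof.
elim: t => [|t IH]; first exact: end_invariant_init.
exact/transmit_invariant/pre_step_invariant.
Qed.

Lemma active_state_invariant (ptime_gt0 : forall j : T, 0 < ptime j) t :
  0 < t -> active_invariant t (active_state G t).
Proof. by case: t => // t _; apply/pre_step_invariant/state_at_invariant. Qed.

Lemma active_is_flow t (s : state) i j n :
  consistent t s -> is_act (fstat s i j n) -> is_flow i j n.
Proof. by move=> cs A; apply: (flow_support cs); move: A; case: fstat. Qed.

Lemma started_pred_done t (s : state) i j a b : consistent t s -> 0 < a -> a < b ->
  is_act (fstat s i j b) || is_done (fstat s i j b) -> fstat s i j a = FDone.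
Proof.
move=> cs a_gt0; elim: b => // b IH lt_aSb started.
have D : fstat s i j b = FDone by apply: (started_chain cs (n := b.+1)) => //; lia.
have [-> // | lt_ab] : a = b \/ a < b by lia.
by apply: IH => //; rewrite D.
Qed.

Lemma active_flow_unique t (s : state) i j a b : consistent t s ->
  is_act (fstat s i j a) -> is_act (fstat s i j b) -> a = b.
Proof.
move=> cs; wlog lt_ab : a b / a < b.
  move=> W A B; case: (ltngtP a b) => cmp; [exact: W | symmetry; exact: W | by []].
move=> A B; have a_gt0 := is_flow_gt0 (active_is_flow cs A).
have D : fstat s i j a = FDone by apply: (started_pred_done cs a_gt0 lt_ab); rewrite B.
by rewrite D in A.
Qed.

End OESInvariants.

Lemma sum_bool_le1 (I : finType) (P : pred I) :
  {in P &, forall x y, x = y} -> \sum_i (P i : nat) <= 1.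
Proof.
move=> uniqP; rewrite -big_mkcond sum1_card.
by apply/card_le1_eqP => x y Px Py; rewrite (uniqP x y).
Qed.

Lemma sum_active_le (R : realFieldType) (G : job R) t (s : state G) i j (P : bool) :
  consistent t s ->
  \sum_(n < (niter G).+1) (is_act (fstat s i j n) && P : nat) <=
    [&& dep i j, place i != place j & P].
Proof.
move=> cs; case: P; last by rewrite big1 // => n _; rewrite andbF.
rewrite andbT; under eq_bigr do rewrite andbT.
case: (boolP (dep i j && (place i != place j))) => [_ | cross].
  apply: (sum_bool_le1 (P := fun n : 'I_(niter G).+1 => is_act (fstat s i j n))).
  by move=> a b A B; apply: ord_inj; apply: active_flow_unique cs A B.
rewrite big1 // => n _; apply/eqP; rewrite eqb0; apply: contra cross => A.
by have /and4P [-> -> _ _] := active_is_flow cs A.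
Qed.

Theorem lemma1 (R : realFieldType) (G : job R)
  (Hp : forall j : task G, 0 < ptime j)
  (HBin : forall m : 'I_(nmach G), (0 < Bin m)%R)
  (HBout : forall m : 'I_(nmach G), (0 < Bout m)%R)
  (Hd : forall i j : task G, forall n : nat, (0 < dvol i j n)%R) :
  forall (t : nat) (m : 'I_(nmach G)), 0 < t ->
    oes_Delta_in G t m <= hat_Delta_in G m /\
    oes_Delta_out G t m <= hat_Delta_out G m.
Proof.
move=> t m t_gt0; have inv := active_state_invariant Hp t_gt0.
split; apply: leq_sum => i _; apply: leq_sum => j _; exact: sum_active_le inv.
Qed.
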